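(* There exist a virtually abelian group $G$ and a finite generating set $S$ of $G$ (with $S=S^{-1}$, $e\notin S$) such that every finite-index free abelian subgroup of $G$ contains an element $g$ with $\kappa(g)>0$ and an element $g'$ with $\kappa(g')<0$, curvature computed with respect to $S$.
   Context: For a group $G$ with finite generating set $S$ ($S=S^{-1}$, $e\notin S$), $|x|$ denotes the word length of $x\in G$ with respect to $S$. For $g\in G$ define $\mathrm{Av}(g)=\frac{1}{|S|}\sum_{a\in S}|a^{-1}ga|$, and for $g\neq e$ define the curvature $\kappa(g)=\frac{|g|-\mathrm{Av}(g)}{|g|}$. *)

From HB Require Import structures.
From mathcomp Require Import all_boot all_order all_algebra.
From mathcomp Require Import boolp.
Set Implicit Arguments.
Unset Strict Implicit.
Unset Printing Implicit Defensive.
Import Order.TTheory GRing.Theory Num.Theory.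

Section GroupDefs.
Variable G : groupType.
Local Open Scope group_scope.

Definition zpow (g : G) (k : int) : G :=
  match k with
  | Posz n => g ^+ n
  | Negz n => (g ^+ n.+1)^-1
  end.

Definition is_subgroup (H : G -> Prop) : Prop :=
  H 1 /\ (forall x y, H x -> H y -> H (x * y^-1)).

Definition finite_index (H : G -> Prop) : Prop :=
  exists r : seq G, forall g : G, exists2 x, x \in r & H (x^-1 * g).

Definition abelian_sub (H : G -> Prop) : Prop :=
  forall x y, H x -> H y -> x * y = y * x.

Definition free_abelian_sub (H : G -> Prop) : Prop :=
  abelian_sub H /\
  exists (n : nat) (b : 'I_n -> G),
    (forall i, H (b i)) /\
    (forall h, H h -> exists! k : {ffun 'I_n -> int},
        h = (\prod_(i < n) zpow (b i) (k i))%g).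

Definition virtually_abelian : Prop :=
  exists H : G -> Prop, [/\ is_subgroup H, finite_index H & abelian_sub H].

Definition sym_gen_set (S : seq G) : Prop :=
  [/\ uniq S, (forall a, a \in S -> a^-1 \in S), 1 \notin S &
      forall g : G, exists w : seq G, all (mem S) w /\ (\prod_(a <- w) a)%g = g].

Definition has_word (S : seq G) (g : G) (n : nat) : Prop :=
  exists w : seq G, [/\ size w = n, all (mem S) w & (\prod_(a <- w) a)%g = g].

(* word length |g| with respect to S (0 if g is not in the span of S) *)
Definition wordlen (S : seq G) (g : G) : nat :=
  match pselect (exists n, `[< has_word S g n >]) with
  | left h => ex_minn h
  | right _ => 0%N
  end.

Local Close Scope group_scope.
Local Open Scope ring_scope.

Definition Av (S : seq G) (g : G) : rat :=
  (\sum_(a <- S) (wordlen S ((a^-1 * g * a)%g))%:R) / (size S)%:R.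

Definition kappa (S : seq G) (g : G) : rat :=
  ((wordlen S g)%:R - Av S g) / (wordlen S g)%:R.

End GroupDefs.

(* The group is G = Z^2 ⋊ Z/2, the swap s exchanging the two coordinates,
   generated by S = {x, x^-1, s} with x = (1, 0).  Conjugating a translation
   by x^(±1) does nothing, and conjugating by s swaps its coordinates, so for a
   translation g the average Av(g) = (2|g| + |s g s|) / 3 and the sign of
   kappa(g) is that of |g| - |s g s|.  Now |x^k| = k while
   y^k = s x^k s, y = (0, 1), has length at least k + 2, hence kappa(x^k) < 0
   < kappa(y^k).  Every finite-index subgroup, free abelian or not, contains
   positive powers of both x and y. *)
From HB Require Import structures.
From mathcomp Require Import all_boot all_order all_algebra.
From mathcomp Require Import boolp.
From mathcomp Require Import zify.
Set Implicit Arguments.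
Unset Strict Implicit.
Unset Printing Implicit Defensive.
Import Order.TTheory GRing.Theory Num.Theory.
Local Open Scope ring_scope.

Section WordLength.
Variable G : groupType.
Implicit Types (S w : seq G) (g : G).

Lemma prodg_nseq k g : (\prod_(a <- nseq k g) a)%g = (g ^+ k)%g.
Proof. by elim: k => [|k IH]; rewrite ?big_nil // big_cons IH expgS. Qed.

Lemma wordlen_le_size S w g :
  all (mem S) w -> (\prod_(a <- w) a)%g = g -> (wordlen S g <= size w)%N.
Proof.
move=> wS wg; rewrite /wordlen.
case: pselect => [h|[]]; last by exists (size w); apply/asboolP; exists w.
by case: ex_minnP => m _; apply; apply/asboolP; exists w.
Qed.

Lemma lipschitz_le_wordlen S (N : G -> nat) g :
  (forall g, exists w, all (mem S) w /\ (\prod_(a <- w) a)%g = g) ->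
  N 1%g = 0%N -> (forall a h, a \in S -> (N (a * h)%g <= (N h).+1)%N) ->
  (N g <= wordlen S g)%N.
Proof.
move=> genS N1 N_lip; rewrite /wordlen.
case: pselect => [h|[]]; last first.
  by have [w [wS wg]] := genS g; exists (size w); apply/asboolP; exists w.
case: ex_minnP => m /asboolP [w [<- wS <-]] _.
elim: w wS => [|a w IH] /=; first by rewrite big_nil N1.
case/andP => aS wS; rewrite big_cons.
by apply: leq_trans (N_lip _ _ aS) _; rewrite ltnS IH.
Qed.

Lemma kappa_gt0 S g :
  (0 < wordlen S g)%N -> (0 < kappa S g) = (Av S g < (wordlen S g)%:R).
Proof. by move=> g_gt0; rewrite pmulr_lgt0 ?invr_gt0 ?ltr0n // subr_gt0. Qed.

Lemma kappa_lt0 S g :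
  (0 < wordlen S g)%N -> (kappa S g < 0) = ((wordlen S g)%:R < Av S g).
Proof. by move=> g_gt0; rewrite pmulr_llt0 ?invr_gt0 ?ltr0n // subr_lt0. Qed.

Lemma finite_index_expg_pos (H : G -> Prop) g :
  is_subgroup H -> finite_index H -> exists2 k, (0 < k)%N & H (g ^+ k)%g.
Proof.
move=> [H1 H_div] [r cosets].
have H_ldiv a b : H a -> H b -> H (a^-1 * b)%g.
  have H_inv c : H c -> H c^-1%g by move/(H_div _ _ H1); rewrite mul1g.
  by move=> /H_inv Ha /H_inv Hb; have := H_div _ _ Ha Hb; rewrite invgK.
have /choice [f Hf] : forall i : 'I_(size r).+1,
    exists j : 'I_(size r), H ((nth 1 r j)^-1 * g ^+ i)%g.
  move=> i; have [x xr Hx] := cosets (g ^+ i)%g.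
  have xr' : (index x r < size r)%N by rewrite index_mem.
  by exists (Ordinal xr'); rewrite /= nth_index.
have /injectivePn [i [j nij fij]] : ~~ injectiveb f.
  by apply/injectiveP => /leq_card; rewrite !card_ord ltnn.
wlog lt_ij : i j nij fij / (i < j)%N.
  move=> wlog_ij; case: (ltngtP i j) => [|lt_ji|/val_inj eq_ij].
  - exact: wlog_ij.
  - by apply: (wlog_ij j i) => //; rewrite eq_sym.
  - by rewrite eq_ij eqxx in nij.
exists (j - i)%N; first by rewrite subn_gt0.
have := H_ldiv _ _ (Hf i) (Hf j); rewrite fij invgM invgK mulgA mulgK.
by rewrite -{1}(subnKC (ltnW lt_ij)) expgnDr mulKg.
Qed.

End WordLength.

(* [(a, b, e)] is the translation by [(a, b)] followed by the coordinate swap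
   when [e] holds, so that [(v, e) * (w, f) = (v + swap^e w, e (+) f)]. *)
Definition ZZswap := (int * int * bool)%type.
HB.instance Definition _ := Choice.on ZZswap.

Definition swap_mul (p q : ZZswap) : ZZswap :=
  let: (a, b, e) := p in let: (c, d, f) := q in
  if e then (a + d, b + c, e (+) f) else (a + c, b + d, e (+) f).
Definition swap_inv (p : ZZswap) : ZZswap :=
  let: (a, b, e) := p in if e then (- b, - a, e) else (- a, - b, e).
Definition swap_one : ZZswap := (0, 0, false).

Lemma swap_mulA : associative swap_mul.
Proof.
by move=> [[a b] []] [[c d] []] [[g h] []] /=; congr (_, _, _); rewrite ?addrA.
Qed.
Lemma swap_mul1 : left_id swap_one swap_mul.
Proof. by move=> [[a b] []] /=; rewrite !add0r. Qed.
Lemma swap_mulg1 : right_id swap_one swap_mul.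
Proof. by move=> [[a b] []] /=; rewrite !addr0. Qed.
Lemma swap_mulVg : left_inverse swap_one swap_inv swap_mul.
Proof. by move=> [[a b] []] /=; rewrite !addNr. Qed.
Lemma swap_mulgV : right_inverse swap_one swap_inv swap_mul.
Proof. by move=> [[a b] []] /=; rewrite !addrN. Qed.

HB.instance Definition _ :=
  isGroup.Build ZZswap swap_mulA swap_mul1 swap_mulg1 swap_mulVg swap_mulgV.

Definition transl (a b : int) : ZZswap := (a, b, false).
Definition gx : ZZswap := transl 1 0.
Definition gy : ZZswap := transl 0 1.
Definition gs : ZZswap := (0, 0, true).
Definition S_swap : seq ZZswap := [:: gx; gx^-1; gs]%g.

Lemma transl_mul a b c d : (transl a b * transl c d)%g = transl (a + c) (b + d).
Proof. by []. Qed.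

Lemma transl_expg a b k : (transl a b ^+ k)%g = transl (a * k%:Z) (b * k%:Z).
Proof.
elim: k => [|k IH]; first by rewrite !mulr0.
by rewrite expgS IH transl_mul intS !mulrDr !mulr1.
Qed.

Lemma transl_eq1 a b : (transl a b = 1)%g <-> a = 0 /\ b = 0.
Proof. by split=> [[-> ->] | [-> ->]]. Qed.

Lemma conjg_gs_transl a b : (gs^-1 * transl a b * gs)%g = transl b a.
Proof. by rewrite /transl /=; congr (_, _, _); rewrite addr0 add0r. Qed.

Lemma conjg_transl_transl a b c d :
  ((transl c d)^-1 * transl a b * transl c d)%g = transl a b.
Proof. by rewrite /transl /=; congr (_, _, _); lia. Qed.

Lemma transl_word (a : int) :
  exists w, all (mem S_swap) w /\ (\prod_(t <- w) t)%g = transl a 0.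
Proof.
case: a => n; [exists (nseq n gx) | exists (nseq n.+1 gx^-1)%g].
all: split; first by elim: n.
- by rewrite prodg_nseq transl_expg mul1r.
- by rewrite prodg_nseq (_ : gx^-1 = transl (-1) 0)%g // transl_expg mulN1r mul0r.
Qed.

Lemma S_swap_generates (g : ZZswap) :
  exists w, all (mem S_swap) w /\ (\prod_(t <- w) t)%g = g.
Proof.
case: g => [[a b] e].
have [[wa [Sa Pa]] [wb [Sb Pb]]] := (transl_word a, transl_word b).
exists (wa ++ gs :: wb ++ gs :: (if e then [:: gs] else [::])); split.
  by rewrite all_cat Sa /= all_cat Sb; case: e.
rewrite big_cat Pa big_cons big_cat Pb big_cons /=.
by case: e; rewrite ?big_cons big_nil /=; congr (_, _, _); lia.
Qed.

Lemma sym_gen_set_S_swap : sym_gen_set S_swap.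
Proof.
split=> //; last exact: S_swap_generates.
by move=> t; rewrite !inE => /or3P [] /eqP ->.
Qed.

Lemma virtually_abelian_ZZswap : virtually_abelian ZZswap.
Proof.
exists (fun p : ZZswap => p.2 = false); split.
- by split=> // -[[a b] []] [[c d] []].
- by exists [:: swap_one; gs] => -[[a b] []]; [exists gs | exists swap_one].
- move=> [[a b] []] [[c d] []] //= _ _.
  by rewrite !transl_mul [a + c]addrC [b + d]addrC.
Qed.

(* A letter changes [`|a| + `|b|] by at most one; the extra [2] pays for the
   two letters [gs] needed to move the second coordinate at all. *)
Definition swap_weight (p : ZZswap) : nat :=
  let: (a, b, e) := p in
  (`|a| + `|b| + (if e then 1 else if b != 0 then 2 else 0))%N.

Lemma swap_weight_mulS t p :
  t \in S_swap -> (swap_weight (t * p)%g <= (swap_weight p).+1)%N.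
Proof.
case: p => [[c d] f]; rewrite !inE => /or3P [] /eqP -> /=; case: f => /=;
  rewrite ?add0r; case: (d =P 0) => [->|nd] /=.
all: case: (c =P 0) => [->|nc] /=; lia.
Qed.

Lemma swap_weight_le_wordlen g : (swap_weight g <= wordlen S_swap g)%N.
Proof.
by apply: lipschitz_le_wordlen; [exact: S_swap_generates | by [] | exact: swap_weight_mulS].
Qed.

Lemma wordlen_transl_x (k : nat) : wordlen S_swap (transl k 0) = k.
Proof.
apply/eqP; rewrite eqn_leq; apply/andP; split.
  rewrite -[leqRHS](size_nseq k gx); apply: wordlen_le_size; first by elim: k.
  by rewrite prodg_nseq transl_expg mul1r.
by have := swap_weight_le_wordlen (transl k 0); rewrite /= !addn0.
Qed.

Lemma wordlen_transl_y (k : nat) :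
  (0 < k)%N -> (k.+2 <= wordlen S_swap (transl 0 k))%N.
Proof.
by move=> k_gt0; have := swap_weight_le_wordlen (transl 0 k); rewrite /= ifT; lia.
Qed.

Lemma Av_transl a b :
  Av S_swap (transl a b) =
  ((wordlen S_swap (transl a b)).*2 + wordlen S_swap (transl b a))%:R / 3%:R.
Proof.
rewrite /Av /S_swap !big_cons big_nil conjg_gs_transl.
rewrite (conjg_transl_transl _ _ 1 0) (conjg_transl_transl _ _ (-1) 0).
by rewrite addr0 addrA -natrD addnn -natrD.
Qed.

Lemma kappa_transl_gt0 a b :
  (wordlen S_swap (transl b a) < wordlen S_swap (transl a b))%N ->
  0 < kappa S_swap (transl a b).
Proof.
move=> lt_ba_ab; rewrite kappa_gt0 ?(leq_ltn_trans _ lt_ba_ab) // Av_transl.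
rewrite ltr_pdivrMr // -natrM ltr_nat; lia.
Qed.

Lemma kappa_transl_lt0 a b :
  (0 < wordlen S_swap (transl a b) < wordlen S_swap (transl b a))%N ->
  kappa S_swap (transl a b) < 0.
Proof.
case/andP=> ab_gt0 lt_ab_ba; rewrite kappa_lt0 // Av_transl.
rewrite ltr_pdivlMr // -natrM ltr_nat; lia.
Qed.

Theorem mainTheorem4 :
  exists (G : groupType) (S : seq G),
    [/\ virtually_abelian G, sym_gen_set S &
      forall H : G -> Prop,
        is_subgroup H -> finite_index H -> free_abelian_sub H ->
        (exists g : G, [/\ H g, g <> 1%g & 0 < kappa S g]) /\
        (exists g' : G, [/\ H g', g' <> 1%g & kappa S g' < 0])].
Proof.
exists ZZswap, S_swap; split.
- exact: virtually_abelian_ZZswap.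
- exact: sym_gen_set_S_swap.
move=> H H_sub H_fin _; split.
- have [k k_gt0] := finite_index_expg_pos gy H_sub H_fin.
  rewrite transl_expg mul0r mul1r => Hk.
  exists (transl 0 k); split=> //; first by case/transl_eq1; lia.
  apply: kappa_transl_gt0; rewrite wordlen_transl_x.
  exact: ltnW (wordlen_transl_y k_gt0).
- have [k k_gt0] := finite_index_expg_pos gx H_sub H_fin.
  rewrite transl_expg mul0r mul1r => Hk.
  exists (transl k 0); split=> //; first by case/transl_eq1; lia.
  apply: kappa_transl_lt0; rewrite wordlen_transl_x k_gt0 /=.
  exact: ltnW (wordlen_transl_y k_gt0).
Qed.
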